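(* For every LTL formula $\varphi$ (in negation normal form) and every $\star\in\{a,s\}$: (i) $\emptyset\models_\star\varphi$ (empty team property); (ii) if $T\models_\star\varphi$ and $T'\subseteq T$ then $T'\models_\star\varphi$ (downward closure); (iii) for every trace $t$, $\{t\}\models_\star\varphi$ iff $t\models\varphi$ in classical LTL semantics (singleton equivalence). Moreover, for the asynchronous semantics: (iv) if $T\models_a\varphi$ and $T'\models_a\varphi$ then $T\cup T'\models_a\varphi$ (union closure); (v) $T\models_a\varphi$ iff $\{t\}\models_a\varphi$ for all $t\in T$ (flatness); consequently $T\models_a\varphi$ iff $t\models\varphi$ for every $t\in T$. Finally, the synchronous semantics is neither union closed nor flat: for $T=\{\{p\}\emptyset^\omega\}$ and $T'=\{\emptyset\{p\}\emptyset^\omega\}$ one has $T\models_s F p$, $T'\models_s Fp$, but $T\cup T'\not\models_s Fp$.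
   Context: Fix a finite set $AP$ of atomic propositions. A trace is an infinite sequence $t=t(0)t(1)t(2)\cdots\in(2^{AP})^\omega$; for $i\ge 0$, $t[i,\infty)=t(i)t(i+1)\cdots$. A team is a (possibly empty, possibly infinite) set $T$ of traces; $T[i,\infty)=\{t[i,\infty):t\in T\}$, and for a function $k:T\to\mathbb N$, $T[k]=\{t[k(t),\infty):t\in T\}$. LTL formulas are given by $\varphi::=p\mid\neg p\mid\varphi\wedge\varphi\mid\varphi\vee\varphi\mid X\varphi\mid F\varphi\mid G\varphi\mid\varphi U\varphi\mid\varphi R\varphi$ with $p\in AP$; $t\models\varphi$ denotes the usual classical LTL semantics on a single trace. Team semantics $\models_\star$, $\star\in\{a,s\}$: $T\models_\star p$ iff $p\in t(0)$ for all $t\in T$; $T\models_\star\neg p$ iff $p\notin t(0)$ for all $t\in T$; $T\models_\star\psi\wedge\varphi$ iff $T\models_\star\psi$ and $T\models_\star\varphi$; $T\models_\star\psi\vee\varphi$ (splitjunction) iff there are $T_1,T_2$ with $T_1\cup T_2=T$, $T_1\models_\star\psi$, $T_2\models_\star\varphi$; $T\models_\star X\varphi$ iff $T[1,\infty)\models_\star\varphi$. Synchronous: $T\models_s F\varphi$ iff $\exists k\ge0$: $T[k,\infty)\models_s\varphi$; $T\models_s G\varphi$ iff $\forall k\ge0$: $T[k,\infty)\models_s\varphi$; $T\models_s\psi U\varphi$ iff $\exists k$: $T[k,\infty)\models_s\varphi$ and $\forall k'<k$: $T[k',\infty)\models_s\psi$; $T\models_s\psi R\varphi$ iff $\forall k$: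 $T[k,\infty)\models_s\varphi$ or $\exists k'<k$: $T[k',\infty)\models_s\psi$. Asynchronous (time advances independently on each trace): $T\models_a F\varphi$ iff there is $k:T\to\mathbb N$ with $T[k]\models_a\varphi$; $T\models_a G\varphi$ iff $T[k]\models_a\varphi$ for all $k:T\to\mathbb N$; $T\models_a\psi U\varphi$ iff there is $k:T\to\mathbb N$ with $T[k]\models_a\varphi$ such that, with $T_>=\{t\in T:k(t)>0\}$, for every $k':T_>\to\mathbb N$ with $k'(t)<k(t)$ for all $t\in T_>$, $\{t[k'(t),\infty):t\in T_>\}\models_a\psi$; $T\models_a\psi R\varphi$ iff for every $k:T\to\mathbb N$ there are $T_1\cup T_2=T$ with $\{t[k(t),\infty):t\in T_1\}\models_a\varphi$ and some $k':T_2\to\mathbb N$ with $k'(t)<k(t)$ for all $t\in T_2$ and $\{t[k'(t),\infty):t\in T_2\}\models_a\psi$. *)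

From mathcomp Require Import all_boot.
Set Implicit Arguments. Unset Strict Implicit. Unset Printing Implicit Defensive.

Section LTL.
Variable AP : finType.

Definition trace := nat -> {set AP}.
Definition suffix (i : nat) (t : trace) : trace := fun n => t (i + n).

Definition team := trace -> Prop.

Inductive formula : Type :=
| FAtom : AP -> formula
| FNAtom : AP -> formula
| FAnd : formula -> formula -> formula
| FOr : formula -> formula -> formula
| FX : formula -> formula
| FF : formula -> formula
| FG : formula -> formula
| FU : formula -> formula -> formula
| FR : formula -> formula -> formula.

Fixpoint lsat (t : trace) (phi : formula) {struct phi} : Prop :=
  match phi with
  | FAtom p => p \in t 0
  | FNAtom p => p \notin t 0
  | FAnd a b => lsat t a /\ lsat t b
  | FOr a b => lsat t a \/ lsat t b
  | FX a => lsat (suffix 1 t) a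
  | FF a => exists k, lsat (suffix k t) a
  | FG a => forall k, lsat (suffix k t) a
  | FU a b => exists k, lsat (suffix k t) b /\ forall k', k' < k -> lsat (suffix k' t) a
  | FR a b => forall k, lsat (suffix k t) b \/ exists k', k' < k /\ lsat (suffix k' t) a
  end.

Definition tshift (i : nat) (T : team) : team :=
  fun u => exists t, T t /\ u = suffix i t.
(* T[k] for k : T -> N (values of k outside T are irrelevant) *)
Definition tshiftk (k : trace -> nat) (T : team) : team :=
  fun u => exists t, T t /\ u = suffix (k t) t.

Definition tunion (T1 T2 : team) : team := fun t => T1 t \/ T2 t.
Definition tsubset (T1 T2 : team) : Prop := forall t, T1 t -> T2 t.
Definition teq (T1 T2 : team) : Prop := forall t, T1 t <-> T2 t.
Definition tempty : team := fun _ => False.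
Definition tsingle (t : trace) : team := fun u => u = t.

Inductive mode := Async | Sync.

Fixpoint tsat (m : mode) (T : team) (phi : formula) {struct phi} : Prop :=
  match phi with
  | FAtom p => forall t, T t -> p \in t 0
  | FNAtom p => forall t, T t -> p \notin t 0
  | FAnd a b => tsat m T a /\ tsat m T b
  | FOr a b => exists T1 T2, teq (tunion T1 T2) T /\ tsat m T1 a /\ tsat m T2 b
  | FX a => tsat m (tshift 1 T) a
  | FF a =>
      match m with
      | Sync => exists k, tsat m (tshift k T) a
      | Async => exists k : trace -> nat, tsat m (tshiftk k T) a
      end
  | FG a =>
      match m with
      | Sync => forall k, tsat m (tshift k T) a
      | Async => forall k : trace -> nat, tsat m (tshiftk k T) a
      end
  | FU a b =>
      match m with
      | Sync => exists k, tsat m (tshift k T) b /\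
                  forall k', k' < k -> tsat m (tshift k' T) a
      | Async => exists k : trace -> nat, tsat m (tshiftk k T) b /\
                  let Tgt := fun t => T t /\ 0 < k t in
                  forall k' : trace -> nat, (forall t, Tgt t -> k' t < k t) ->
                    tsat m (tshiftk k' Tgt) a
      end
  | FR a b =>
      match m with
      | Sync => forall k, tsat m (tshift k T) b \/
                  exists k', k' < k /\ tsat m (tshift k' T) a
      | Async => forall k : trace -> nat, exists T1 T2,
                  teq (tunion T1 T2) T /\ tsat m (tshiftk k T1) b /\
                  exists k' : trace -> nat, (forall t, T2 t -> k' t < k t) /\
                    tsat m (tshiftk k' T2) a
      end
  end.

Definition trace_at (p : AP) (i : nat) : trace :=
  fun n => if n == i then [set p] else set0.

End LTL.

From Stdlib Require Import Setoid Classical ClassicalEpsilon.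
From mathcomp Require Import all_boot zify.

Set Implicit Arguments.
Unset Strict Implicit.
Unset Printing Implicit Defensive.

(** Asynchronous temporal operators choose a time independently for each
    trace, so by the axiom of choice a team satisfies a formula iff each of
    its traces does classically; the empty team, downward closure, union
    closure and singleton equivalence are immediate consequences of this
    flatness.  Synchronously, downward closure and the empty team property
    follow by induction on the formula, and a singleton team stays a
    singleton under synchronous shifts, while any split of it puts the trace
    in one part; this gives singleton equivalence.  The traces {p}0^w and
    0{p}0^w reach p at different times, so no common time works for their
    union. *)

Lemma choice_in (A : Type) (D : A -> Prop) (P : A -> nat -> Prop) :
  (forall a, D a -> exists n, P a n) ->
  exists f : A -> nat, forall a, D a -> P a (f a).
Proof.
move=> H; apply: (ClassicalEpsilon.choice (fun a n => D a -> P a n)) => a.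
have [/H [n Pn]|nDa] := classic (D a); first by exists n.
by exists 0 => /nDa.
Qed.

Section Teams.
Variable AP : finType.
Implicit Types (p : AP) (T : team AP) (t u : trace AP) (phi : formula AP).

Lemma forall_tshift i T (P : trace AP -> Prop) :
  (forall u, tshift i T u -> P u) <-> (forall t, T t -> P (suffix i t)).
Proof. by split=> [H t Tt | H _ [t [Tt ->]]]; [apply: H; exists t | apply: H]. Qed.

Lemma forall_tshiftk k T (P : trace AP -> Prop) :
  (forall u, tshiftk k T u -> P u) <-> (forall t, T t -> P (suffix (k t) t)).
Proof. by split=> [H t Tt | H _ [t [Tt ->]]]; [apply: H; exists t | apply: H]. Qed.

Lemma tunion_sep T (P : trace AP -> Prop) :
  teq (tunion (fun t => T t /\ P t) (fun t => T t /\ ~ P t)) T.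
Proof. by move=> t; rewrite /tunion; have := classic (P t); tauto. Qed.

Definition async_flat phi :=
  forall T, tsat Async T phi <-> (forall t, T t -> lsat t phi).

Lemma async_flat_and a b : async_flat a -> async_flat b -> async_flat (FAnd a b).
Proof. by move=> IHa IHb T /=; rewrite IHa IHb; firstorder. Qed.

Lemma async_flat_or a b : async_flat a -> async_flat b -> async_flat (FOr a b).
Proof.
move=> IHa IHb T /=; split=> [[T1 [T2 [E []]]] | H].
  by rewrite IHa IHb => H1 H2 t /E [/H1|/H2]; [left|right].
exists (fun t => T t /\ lsat t a), (fun t => T t /\ ~ lsat t a).
split; first exact: tunion_sep.
by rewrite IHa IHb; split=> t [Tt Ht] //; case: (H t Tt).
Qed.

Lemma async_flat_X a : async_flat a -> async_flat (FX a).
Proof. by move=> IH T /=; rewrite IH forall_tshift. Qed.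

Lemma async_flat_F a : async_flat a -> async_flat (FF a).
Proof.
move=> IH T /=; split=> [[k] | /choice_in [k Hk]].
  by rewrite IH forall_tshiftk => H t /H; exists (k t).
by exists k; rewrite IH forall_tshiftk.
Qed.

Lemma async_flat_G a : async_flat a -> async_flat (FG a).
Proof.
move=> IH T /=; split=> [H t Tt n | H k]; last by rewrite IH forall_tshiftk => t /H.
by move: (H (fun=> n)); rewrite IH forall_tshiftk; apply.
Qed.

(* The prefix condition of [U] quantifies over all earlier times at once, so
   a single earlier time [j] is reached by the choice [minn j (k s).-1]. *)
Lemma async_flat_U a b : async_flat a -> async_flat b -> async_flat (FU a b).
Proof.
move=> IHa IHb T /=; split=> [[k [Hb Ha]] t Tt | /choice_in [k Hk]].
  move: Hb; rewrite IHb forall_tshiftk => /(_ t Tt) Hb; exists (k t); split=> // j jk.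
  have Hk' : forall s, T s /\ 0 < k s -> minn j (k s).-1 < k s by move=> s [_]; lia.
  move: (Ha _ Hk'); rewrite IHa forall_tshiftk => /(_ t).
  have -> : minn j (k t).-1 = j by lia.
  by apply; split=> //; lia.
exists k; split; first by rewrite IHb forall_tshiftk => t /Hk [].
by move=> k' Hk'; rewrite IHa forall_tshiftk => t [Tt kt]; apply: (Hk t Tt).2; apply: Hk'.
Qed.

Lemma async_flat_R a b : async_flat a -> async_flat b -> async_flat (FR a b).
Proof.
move=> IHa IHb T /=; split=> [H t Tt n | H k].
  have [T1 [T2 [E [H1 [k' [Hk' H2]]]]]] := H (fun=> n).
  move: H1 H2; rewrite IHb IHa !forall_tshiftk => H1 H2.
  by case: (E t).2 => // Ht; [left; apply: H1 | right; exists (k' t); split; auto].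
pose Pb t := lsat (suffix (k t) t) b.
exists (fun t => T t /\ Pb t), (fun t => T t /\ ~ Pb t); split; first exact: tunion_sep.
split; first by rewrite IHb forall_tshiftk => t [].
have /choice_in [k' Hk'] : forall t, T t /\ ~ Pb t -> exists j, j < k t /\ lsat (suffix j t) a.
  by move=> t [Tt nPb]; case: (H t Tt (k t)).
by exists k'; split=> [t /Hk' [] //|]; rewrite IHa forall_tshiftk => t /Hk' [].
Qed.

Lemma async_flatP phi : async_flat phi.
Proof.
elim: phi => [p|p|a IHa b IHb|a IHa b IHb|a IH|a IH|a IH|a IHa b IHb|a IHa b IHb].
- by move=> T; split.
- by move=> T; split.
- exact: async_flat_and.
- exact: async_flat_or.
- exact: async_flat_X.
- exact: async_flat_F.
- exact: async_flat_G.
- exact: async_flat_U.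
- exact: async_flat_R.
Qed.

Lemma tsat_async_single phi t : tsat Async (tsingle t) phi <-> lsat t phi.
Proof. by rewrite async_flatP; split=> [H | H _ ->]; exact: H. Qed.

Lemma tshift_sub i T T' : tsubset T' T -> tsubset (tshift i T') (tshift i T).
Proof. by move=> sub _ [t [/sub Tt ->]]; exists t. Qed.

Lemma tsat_sync_sub phi T T' : tsat Sync T phi -> tsubset T' T -> tsat Sync T' phi.
Proof.
elim: phi T T' => [p|p|a IHa b IHb|a IHa b IHb|a IH|a IH|a IH|a IHa b IHb|a IHa b IHb]
  T T' /= H sub.
- by move=> t /sub /H.
- by move=> t /sub /H.
- by case: H => Ha Hb; split; [apply: (IHa _ _ Ha sub) | apply: (IHb _ _ Hb sub)].
- case: H => [T1 [T2 [E [H1 H2]]]].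
  exists (fun t => T1 t /\ T' t), (fun t => T2 t /\ T' t); split.
    by move=> t; split=> [[[]|[]] //| Tt]; case: ((E t).2 (sub t Tt)); [left|right].
  by split; [apply: (IHa _ _ H1) | apply: (IHb _ _ H2)] => t [].
- exact: (IH _ _ H (tshift_sub sub)).
- by case: H => k Hk; exists k; apply: (IH _ _ Hk (tshift_sub sub)).
- by move=> k; apply: (IH _ _ (H k) (tshift_sub sub)).
- case: H => k [Hb Ha]; exists k; split; first exact: (IHb _ _ Hb (tshift_sub sub)).
  by move=> k' /Ha Ha'; apply: (IHa _ _ Ha' (tshift_sub sub)).
- move=> k; case: (H k) => [Hb | [k' [lt_k' Ha]]]; [left | right; exists k'; split] => //.
    exact: (IHb _ _ Hb (tshift_sub sub)).
  exact: (IHa _ _ Ha (tshift_sub sub)).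
Qed.

Lemma tsat_sync_void phi T : (forall t, ~ T t) -> tsat Sync T phi.
Proof.
have shift_void i T0 : (forall t, ~ T0 t) -> forall t, ~ tshift i T0 t.
  by move=> void _ [t [Tt _]]; apply: (void t).
elim: phi T => [p|p|a IHa b IHb|a IHa b IHb|a IH|a IH|a IH|a IHa b IHb|a IHa b IHb]
  T void /=.
- by move=> t /void.
- by move=> t /void.
- by split; [apply: IHa | apply: IHb].
- by exists T, T; split; [move=> t; rewrite /tunion; tauto | split; [apply: IHa | apply: IHb]].
- exact/IH/shift_void.
- by exists 0; apply/IH/shift_void.
- by move=> k; apply/IH/shift_void.
- by exists 0; split=> [|k']; [apply/IHb/shift_void | rewrite ltn0].
- by move=> k; left; apply/IHb/shift_void.
Qed.

Lemma tsat_sync_shift_single phi i t :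
  tsat Sync (tshift i (tsingle t)) phi <-> tsat Sync (tsingle (suffix i t)) phi.
Proof.
split=> H; apply: (tsat_sync_sub H); first by move=> _ ->; exists t.
by move=> _ [_ [-> ->]].
Qed.

Lemma tsat_sync_single phi t : tsat Sync (tsingle t) phi <-> lsat t phi.
Proof.
elim: phi t => [p|p|a IHa b IHb|a IHa b IHb|a IH|a IH|a IH|a IHa b IHb|a IHa b IHb] t /=;
  try setoid_rewrite tsat_sync_shift_single.
- by split=> [H | H _ ->]; exact: H.
- by split=> [H | H _ ->]; exact: H.
- by rewrite IHa IHb.
- split=> [[T1 [T2 [E [H1 H2]]]] | [Ha|Hb]].
  + by case: (E t).2 => // Ht; [left; apply/IHa | right; apply/IHb];
      [apply: (tsat_sync_sub H1) | apply: (tsat_sync_sub H2)] => _ ->.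
  + exists (tsingle t), (@tempty AP); split; first by move=> u; rewrite /tunion /tempty; tauto.
    by split; [apply/IHa | apply: tsat_sync_void => ? []].
  + exists (@tempty AP), (tsingle t); split; first by move=> u; rewrite /tunion /tempty; tauto.
    by split; [apply: tsat_sync_void => ? [] | apply/IHb].
- exact: IH.
- by setoid_rewrite IH.
- by setoid_rewrite IH.
- by setoid_rewrite IHa; setoid_rewrite IHb.
- by setoid_rewrite IHa; setoid_rewrite IHb.
Qed.

Lemma trace_at_suffix p i k : (p \in suffix k (trace_at p i) 0) = (k == i).
Proof. by rewrite /suffix /trace_at addn0; case: eqP; rewrite ?set11 ?inE. Qed.

Lemma tsat_sync_F_trace_at p i : tsat Sync (tsingle (trace_at p i)) (FF (FAtom p)).
Proof. by apply/tsat_sync_single; exists i; rewrite /= trace_at_suffix. Qed.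

Lemma tsat_sync_F_trace_at_tunion p i j : i != j ->
  ~ tsat Sync (tunion (tsingle (trace_at p i)) (tsingle (trace_at p j))) (FF (FAtom p)).
Proof.
move=> /negbTE neq_ij [k /forall_tshift Hk].
move: (Hk _ (or_introl erefl)) (Hk _ (or_intror erefl)).
by rewrite !trace_at_suffix => /eqP->; rewrite neq_ij.
Qed.

End Teams.

Theorem mainTheorem1 :
  (forall (AP : finType) (phi : formula AP) (m : mode),
      tsat m (@tempty AP) phi
   /\ (forall T T' : team AP, tsat m T phi -> tsubset T' T -> tsat m T' phi)
   /\ (forall t : trace AP, tsat m (tsingle t) phi <-> lsat t phi))
  /\ (forall (AP : finType) (phi : formula AP),
      (forall T T' : team AP, tsat Async T phi -> tsat Async T' phi ->
                              tsat Async (tunion T T') phi)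
   /\ (forall T : team AP,
        tsat Async T phi <-> (forall t, T t -> tsat Async (tsingle t) phi))
   /\ (forall T : team AP,
        tsat Async T phi <-> (forall t, T t -> lsat t phi)))
  /\ (forall (AP : finType) (p : AP),
      let T := tsingle (trace_at p 0) in
      let T' := tsingle (trace_at p 1) in
      tsat Sync T (FF (FAtom p)) /\ tsat Sync T' (FF (FAtom p)) /\
      ~ tsat Sync (tunion T T') (FF (FAtom p))).
Proof.
split; [|split].
- move=> AP phi [|]; (split; [|split]).
  + by rewrite async_flatP.
  + by move=> T T'; rewrite !async_flatP => H sub t /sub /H.
  + exact: tsat_async_single.
  + by apply: tsat_sync_void => ? [].
  + exact: tsat_sync_sub.
  + exact: tsat_sync_single.
- move=> AP phi; split; [|split]; move=> T.
  + by move=> T'; rewrite !async_flatP => H H' t [/H | /H'].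
  + by setoid_rewrite tsat_async_single; exact: async_flatP.
  + exact: async_flatP.
- move=> AP p T T'; split; last split.
  + exact: tsat_sync_F_trace_at.
  + exact: tsat_sync_F_trace_at.
  + exact: tsat_sync_F_trace_at_tunion.
Qed.
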